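(* Let $1<k<n-1$. For the transposition $(1\ 2)\in\mathfrak{S}_2$ and $i_1,i_2,j_1,j_2\in\{1,\dots,n\}$, $$\Delta^{n,k}_{(1\,2)}\big((i_1,i_2),(j_1,j_2)\big)=\delta(i_1,j_1)\delta(i_2,j_2)\frac{1}{k^2}\binom{n-2}{k-2}+\delta(i_1,j_2)\delta(i_2,j_1)\frac{1}{k^2}\binom{n-2}{k-1},$$ which equals $\frac{1}{k^2}\binom{n-1}{k-1}$ if $i_1=i_2=j_1=j_2$; $\frac{1}{k^2}\binom{n-2}{k-1}$ if $i_1=j_2\ne i_2=j_1$; $\frac{1}{k^2}\binom{n-2}{k-2}$ if $i_1=j_1\neq i_2=j_2$; and $0$ otherwise.
   Context: $\mathcal{A}_r=\{(a_1,\dots,a_r)\in\{1,\dots,n\}^{\times r}:a_1<\dots<a_r\}$. For $\bm{i}\in\{1,\dots,n\}^{\times k}$: $\mathrm{sgn}(\bm{i})=0$ if its entries are not all distinct, otherwise the sign of the unique permutation sorting $\bm{i}$ increasingly; $\mathrm{sr}(\bm{i})$ is $\bm{i}$ sorted in nondecreasing order; $(i,\bm{l})=(i,l_1,\dots,l_{k-1})$. For $\sigma\in\mathfrak{S}_p$ and $\bm{i},\bm{j}\in\{1,\dots,n\}^{\times p}$, the fermionic $\Delta$-function is $$\Delta^{n,k}_\sigma(\bm{i},\bm{j})=\frac{1}{k^p}\sum_{\substack{\bm{l}^{(1)}\in\mathcal{A}_{k-1}\\ \bm{l}^{(1)}\not\ni i_1,j_1}}\cdots\sum_{\substack{\bm{l}^{(p)}\in\mathcal{A}_{k-1}\\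 \bm{l}^{(p)}\not\ni i_p,j_p}}\prod_{s=1}^p\mathrm{sgn}(i_s,\bm{l}^{(s)})\mathrm{sgn}(j_s,\bm{l}^{(s)})\ \delta_\sigma\Big(\big(\mathrm{sr}(i_s,\bm{l}^{(s)})\big)_{s=1}^p,\big(\mathrm{sr}(j_s,\bm{l}^{(s)})\big)_{s=1}^p\Big),$$ where ''$\bm{l}\not\ni i,j$'' means neither $i$ nor $j$ is an entry of $\bm{l}$, and $\delta_\sigma(\bm{a},\bm{b})=\prod_{r=1}^p\delta(a_{\sigma(r)},b_r)$ with $\delta$ the Kronecker delta (equality of sequences). *)

From mathcomp Require Import all_boot all_order all_algebra all_fingroup.
Set Implicit Arguments. Unset Strict Implicit. Unset Printing Implicit Defensive.
Import Order.TTheory GRing.Theory Num.Theory.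
Local Open Scope ring_scope.

Definition sgn (R : numFieldType) (t : seq nat) : R :=
  if uniq t then
    match [pick s : 'S_(size t) |
             sorted leq [seq nth 0%N t (s x) | x <- enum 'I_(size t)]] with
    | Some s => (-1) ^+ (odd_perm s)
    | None => 0
    end
  else 0.

Definition sr (t : seq nat) : seq nat := sort leq t.

Definition inA (n r : nat) (l : r.-tuple 'I_n) : bool :=
  sorted ltn (map val l).

(* The fermionic Delta-function Delta^{n,k}_sigma(i, j), indices in 'I_n
   (0-based relabelling of {1..n}). *)
Definition Delta (R : numFieldType) (n k p : nat) (sigma : 'S_p)
    (i j : p.-tuple 'I_n) : R :=
  ((k%:R ^+ p)^-1) *
  \sum_(L : {ffun 'I_p -> (k.-1).-tuple 'I_n} |
          [forall s, [&& inA (L s), tnth i s \notin L s & tnth j s \notin L s]])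
    ((\prod_(s < p) (sgn R (val (tnth i s) :: map val (L s)) *
                     sgn R (val (tnth j s) :: map val (L s)))) *
     \prod_(r < p)
       ((sr (val (tnth i (sigma r)) :: map val (L (sigma r)))
         == sr (val (tnth j r) :: map val (L r)) : nat)%:R)).

From mathcomp Require Import all_boot all_order all_algebra all_fingroup.
From mathcomp Require Import zify.
Set Implicit Arguments. Unset Strict Implicit. Unset Printing Implicit Defensive.
Import Order.TTheory GRing.Theory Num.Theory.
Local Open Scope ring_scope.

(* For the transposition, the term of Delta indexed by increasing (k-1)-tuples L1, L2
   survives only if {j1} ∪ L1 = {i2} ∪ L2 and {i1} ∪ L1 = {j2} ∪ L2.  Since L1 and L2
   have the same size, this forces either (j1, j2) = (i1, i2), or (j1, j2) = (i2, i1)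
   and L1 = L2; in both cases the four signs multiply to 1.  In the first case the
   surviving pairs are indexed by the k-sets {i1} ∪ L1 containing i1 and i2, in the
   second by the (k-1)-sets L1 avoiding i1 and i2, whence the binomial coefficients. *)

Lemma sgn_mul_self (R : numFieldType) (t : seq nat) : uniq t -> sgn R t * sgn R t = 1.
Proof.
rewrite /sgn => ->; case: pickP => [s _|unsorted]; first by rewrite -signr_addb addbb.
have /tuple_permP [s def_t] : perm_eq (sort leq t) (in_tuple t) by rewrite perm_sort.
have sorted_t : [seq nth 0%N t (s i) | i <- enum 'I_(size t)] = sort leq t.
  by rewrite def_t /=; apply: eq_map => i; rewrite (tnth_nth 0%N).
by have := unsorted s; rewrite /= sorted_t (sort_sorted leq_total).
Qed.

Lemma sr_map_val_eq n (s t : seq 'I_n) : uniq s -> uniq t ->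
  (sr (map val s) == sr (map val t)) = ([set:: s] == [set:: t]).
Proof.
move=> uniq_s uniq_t; apply/eqP/eqP => [/(perm_sortP leq_total leq_trans anti_leq)|/setP st].
  by move/(perm_map_inj val_inj)/perm_mem => st; apply/setP => z; rewrite !inE st.
apply/(perm_sortP leq_total leq_trans anti_leq)/perm_map/uniq_perm => // z.
by have := st z; rewrite !inE.
Qed.

Lemma sorted_enum_set n (A : {set 'I_n}) : sorted ltn (map val (enum A)).
Proof.
rewrite -[enum _](eq_filter (mem_enum _)).
rewrite -(eq_filter (mem_map val_inj _)) -filter_map.
by rewrite (sorted_filter ltn_trans) // unlock val_ord_enum iota_ltn_sorted.
Qed.

Lemma inA_uniq n m (t : m.-tuple 'I_n) : inA t -> uniq t.
Proof. by move=> /(sorted_uniq ltn_trans ltnn); rewrite (map_inj_uniq val_inj). Qed.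

Lemma inA_inj n m (t u : m.-tuple 'I_n) : inA t -> inA u -> [set:: t] = [set:: u] -> t = u.
Proof.
rewrite /inA !sorted_map => inc_t inc_u /setP tu; apply/val_inj.
apply: (irr_sorted_eq _ _ inc_t inc_u) => [? ? ?|?|x]; first exact: ltn_trans.
  exact: ltnn.
by have := tu x; rewrite !inE.
Qed.

Lemma big_inA_set (V : nmodType) n m (P : pred {set 'I_n}) (F : {set 'I_n} -> V) :
  \sum_(t : m.-tuple 'I_n | inA t && P [set:: t]) F [set:: t] =
  \sum_(A : {set 'I_n} | (#|A| == m) && P A) F A.
Proof.
pose S := [pred t : m.-tuple 'I_n | inA t && P [set:: t]].
have inj_set : {in S &, injective (fun t : m.-tuple 'I_n => [set:: t])}.
  by move=> t u /andP [inc_t _] /andP [inc_u _]; apply: inA_inj.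
rewrite -(big_imset F inj_set) /=; apply: eq_bigl => A.
apply/imsetP/andP => [[t /andP [inc_t Pt] ->]|[/eqP cardA PA]].
  by rewrite cardsE (card_uniqP (inA_uniq inc_t)) size_tuple eqxx.
have size_enum : size (enum A) == m by rewrite -cardE cardA.
have set_tuple : [set:: Tuple size_enum] = A by exact: set_enum.
by exists (Tuple size_enum); rewrite ?inE set_tuple // /inA sorted_enum_set.
Qed.

Lemma big_ffun_ord2 (R : Type) (idx : R) (op : Monoid.com_law idx) (T : finType)
    (P : pred {ffun 'I_2 -> T}) (F : {ffun 'I_2 -> T} -> R) :
  \big[op/idx]_(f | P f) F f =
  \big[op/idx]_(p : T * T | P [ffun s => if s == ord0 then p.1 else p.2])
     F [ffun s => if s == ord0 then p.1 else p.2].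
Proof.
pose g (p : T * T) := [ffun s : 'I_2 => if s == ord0 then p.1 else p.2].
have g_bij : bijective g.
  exists (fun f : {ffun 'I_2 -> T} => (f ord0, f ord_max)) => [[a b]|f]; first by rewrite !ffunE.
  by apply/ffunP => -[[|[|//]] s_lt2]; rewrite ffunE; congr (f _); apply: val_inj.
exact: (reindex g (onW_bij _ g_bij)).
Qed.

Lemma setU1_eq (T : finType) (x y : T) (A B : {set T}) :
  x \notin A -> y \notin B -> (y |: B == x |: A) = (y \in x |: A) && (B == (x |: A) :\ y).
Proof.
move=> xA yB; apply/eqP/andP => [<-|[yxA /eqP ->]]; last exact: setD1K.
by rewrite setU11 setU1K.
Qed.

Lemma sum_nat_pred1 (T : finType) (P : pred T) (a : T) :
  (\sum_(x | P x) (x == a : nat) = P a)%N.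
Proof. by rewrite -big_mkcondr big_andbC big_mkcondr big_pred1_eq. Qed.

Lemma sum1_draws_disjoint (T : finType) (D : {set T}) m :
  (\sum_(A : {set T} | [disjoint D & A] && (#|A| == m)) 1 = 'C(#|T| - #|D|, m))%N.
Proof.
rewrite sum1dep_card -(cardsC D) addKn -cards_draws; apply: eq_card => A.
by rewrite !inE disjoint_sym disjoints_subset.
Qed.

Lemma sum1_draws_notin (T : finType) (x : T) m :
  (\sum_(A : {set T} | (#|A| == m) && (x \notin A)) 1 = 'C(#|T| - 1, m))%N.
Proof.
have := sum1_draws_disjoint [set x] m; rewrite cards1 => <-.
by apply: eq_bigl => A; rewrite disjoints1 andbC.
Qed.

Lemma sum1_draws_notin2 (T : finType) (x y : T) m : x != y ->
  (\sum_(A : {set T} | (#|A| == m) && ((x \notin A) && (y \notin A))) 1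
   = 'C(#|T| - 2, m))%N.
Proof.
move=> neq_xy; have := sum1_draws_disjoint [set x; y] m; rewrite cards2 neq_xy => <-.
by apply: eq_bigl => A; rewrite disjoints_subset subUset !sub1set !inE andbC.
Qed.

Lemma sum_draws_notin_mem (T : finType) (x y : T) m : x != y -> (0 < m)%N ->
  (\sum_(A : {set T} | (#|A| == m) && (x \notin A)) (y \in A : nat)
   = 'C(#|T| - 2, m.-1))%N.
Proof.
move=> neq_xy m_gt0.
have card_gt1 : (1 < #|T|)%N by apply/card_gt1P; exists x, y.
have := sum1_draws_notin x m; rewrite (bigID (fun A : {set T} => y \in A)) /= -big_mkcondr.
under [X in (_ + X)%N]eq_bigl => A do rewrite -andbA.
rewrite sum1_draws_notin2 //.
have -> : (#|T| - 1 = (#|T| - 2).+1)%N by lia.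
move=> split_count; apply: (@addIn 'C(#|T| - 2, m)); rewrite split_count.
by rewrite -{1}(prednK m_gt0) binS prednK // addnC.
Qed.

(* The two Kronecker deltas of [δ_(1 2)], read on the sets of entries
   [A] of [l^(1)] and [B] of [l^(2)]. *)
Definition swap_match (T : finType) (i1 i2 j1 j2 : T) (A B : {set T}) : bool :=
  (i2 |: B == j1 |: A) && (i1 |: A == j2 |: B).

Lemma swap_matchP (T : finType) (i1 i2 j1 j2 : T) (A B : {set T}) :
  i1 \notin A -> j1 \notin A -> i2 \notin B -> j2 \notin B ->
  swap_match i1 i2 j1 j2 A B -> (i1 = j1 /\ i2 = j2) \/ [/\ i1 = j2, i2 = j1 & A = B].
Proof.
have mem_setU1 x z (C : {set T}) : x \in z |: C -> x \notin C -> x = z.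
  by rewrite in_setU1 => /orP [/eqP //|xC /negP].
have [<-|ne11] := eqVneq i1 j1 => i1A j1A i2B j2B /andP [/eqP E1 /eqP E2].
  by left; split; last apply: mem_setU1 i2B; rewrite // -E2 -E1 setU11.
have sub_BA : B \subset A.
  apply/subsetP => x xB; have := setU1r i2 xB; rewrite E1 => /setU1P [x_j1|//].
  have := setU1r j2 xB; rewrite -E2 => /setU1P [x_i1|//].
  by move: ne11; rewrite -x_i1 -x_j1 eqxx.
have cardAB : #|A| = #|B|.
  by have := cardsU1 i2 B; rewrite E1 cardsU1 i2B j1A => /addnI.
have AB : A = B by apply/eqP; rewrite eq_sym eqEcard sub_BA cardAB leqnn.
subst B; right; split => //.
  by apply: mem_setU1 i1A; rewrite -E2 setU11.
by apply/esym/(mem_setU1 _ _ _ _ j1A); rewrite E1 setU11.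
Qed.

Lemma sum_swap_match_id (T : finType) (x y : T) m : (0 < m)%N ->
  (\sum_(A : {set T} | (#|A| == m) && ((x \notin A) && (x \notin A)))
     \sum_(B : {set T} | (#|B| == m) && ((y \notin B) && (y \notin B))) swap_match x y x y A B
   = if x == y then 'C(#|T| - 1, m) else 'C(#|T| - 2, m.-1))%N.
Proof.
move=> m_gt0.
transitivity (\sum_(A : {set T} | (#|A| == m) && (x \notin A)) (y \in x |: A : nat))%N.
  apply: eq_big => [A|A /andP [/eqP cardA /andP [xA _]]]; first by rewrite andbb.
  under eq_bigr => B /andP [_ /andP [yB _]].
    by rewrite /swap_match [x |: A == _]eq_sym andbb setU1_eq //; over.
  have [yxA|_] := boolP (y \in x |: A); last by rewrite big1.
  rewrite sum_nat_pred1 !inE eqxx andbT /=.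
  by have := cardsD1 y (x |: A); rewrite yxA cardsU1 xA cardA => /addnI <-; rewrite eqxx.
have [<-|neq_xy] := eqVneq x y.
  by under eq_bigr do rewrite setU11; rewrite sum1_draws_notin.
under eq_bigr do rewrite in_setU1 eq_sym (negPf neq_xy).
exact: sum_draws_notin_mem.
Qed.

Lemma sum_swap_match_swap (T : finType) (x y : T) m : x != y ->
  (\sum_(A : {set T} | (#|A| == m) && ((x \notin A) && (y \notin A)))
     \sum_(B : {set T} | (#|B| == m) && ((y \notin B) && (x \notin B))) swap_match x y y x A B
   = 'C(#|T| - 2, m))%N.
Proof.
move=> neq_xy; rewrite -(sum1_draws_notin2 m neq_xy).
apply: eq_bigr => A /andP [cardA /andP [xA yA]].
under eq_bigr => B /andP [_ /andP [yB xB]].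
  by rewrite /swap_match !setU1_eq // !setU11 !setU1K //= [A == B]eq_sym andbb; over.
by rewrite sum_nat_pred1 cardA xA yA.
Qed.

Lemma sum_swap_match (T : finType) (i1 i2 j1 j2 : T) m : (0 < m)%N ->
  (\sum_(A : {set T} | (#|A| == m) && ((i1 \notin A) && (j1 \notin A)))
     \sum_(B : {set T} | (#|B| == m) && ((i2 \notin B) && (j2 \notin B)))
       swap_match i1 i2 j1 j2 A B
   = if [&& i1 == i2, i2 == j1 & j1 == j2] then 'C(#|T| - 1, m)
     else if [&& i1 == j2, i2 == j1 & i1 != i2] then 'C(#|T| - 2, m)
     else if [&& i1 == j1, i2 == j2 & i1 != i2] then 'C(#|T| - 2, m.-1) else 0)%N.
Proof.
move=> m_gt0.
have [/andP [/eqP -> /eqP ->]|not_id] := boolP ((j1 == i1) && (j2 == i2)).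
  by rewrite sum_swap_match_id //; have [<-|neq12] := eqVneq i1 i2; rewrite ?eqxx //= (negPf neq12).
move: not_id; have [/andP [/eqP -> /eqP ->]|not_swap] := boolP ((j1 == i2) && (j2 == i1)) => not_id.
  have neq12 : i1 != i2 by apply: contraNneq not_id => ->; rewrite eqxx.
  by rewrite sum_swap_match_swap // (negPf neq12) !eqxx.
rewrite big1 => [|A /andP [_ /andP [i1A j1A]]].
  by move: not_id not_swap; repeat (case: eqP => ? //=; subst).
apply: big1 => B /andP [_ /andP [i2B j2B]]; apply/eqP; rewrite eqb0.
apply/negP => /(swap_matchP i1A j1A i2B j2B) [[e1 e2]|[e1 e2 _]].
  by move: not_id; rewrite e1 e2 !eqxx.
by move: not_swap; rewrite e1 e2 !eqxx.
Qed.

Lemma sgn_sr_swap_match (R : numFieldType) n m (a b : m.-tuple 'I_n) (i1 i2 j1 j2 : 'I_n) :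
  inA a -> inA b -> i1 \notin a -> j1 \notin a -> i2 \notin b -> j2 \notin b ->
  sgn R (val i1 :: map val a) * sgn R (val j1 :: map val a) *
    (sgn R (val i2 :: map val b) * sgn R (val j2 :: map val b)) *
  ((sr (val i2 :: map val b) == sr (val j1 :: map val a))%:R *
    (sr (val i1 :: map val a) == sr (val j2 :: map val b))%:R)
  = (swap_match i1 i2 j1 j2 [set:: a] [set:: b])%:R.
Proof.
move=> inc_a inc_b i1a j1a i2b j2b.
have uniq_cons x (t : m.-tuple 'I_n) : inA t -> x \notin t -> uniq (x :: t).
  by move=> inc_t xt; rewrite /= xt inA_uniq.
have uniq_val_cons x (t : m.-tuple 'I_n) : inA t -> x \notin t -> uniq (val x :: map val t).
  by move=> inc_t xt; change (uniq (map val (x :: t))); rewrite (map_inj_uniq val_inj) uniq_cons.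
rewrite !(sr_map_val_eq (s := _ :: _) (t := _ :: _)) ?uniq_cons // !set_cons.
rewrite -natrM mulnb -/(swap_match i1 i2 j1 j2 [set:: a] [set:: b]).
have [matched|_] := boolP (swap_match i1 i2 j1 j2 [set:: a] [set:: b]); last by rewrite mulr0.
rewrite mulr1; have nin x (t : m.-tuple 'I_n) : x \notin t -> x \notin [set:: t] by rewrite inE.
case: (swap_matchP (nin _ _ i1a) (nin _ _ j1a) (nin _ _ i2b) (nin _ _ j2b) matched).
  by case=> <- <-; rewrite !sgn_mul_self ?uniq_val_cons // mulr1.
case=> <- <- /(inA_inj inc_a inc_b) ab; rewrite -ab in i2b j2b *.
by rewrite [X in _ * X]mulrC mulrACA !sgn_mul_self ?uniq_val_cons // mulr1.
Qed.

Lemma Delta_tperm01 (R : numFieldType) n k (i1 i2 j1 j2 : 'I_n) :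
  @Delta R n k 2 (tperm (0 : 'I_2) 1) [tuple i1; i2] [tuple j1; j2] =
  (k%:R ^+ 2)^-1 *
  (\sum_(A : {set 'I_n} | (#|A| == k.-1) && ((i1 \notin A) && (j1 \notin A)))
     \sum_(B : {set 'I_n} | (#|B| == k.-1) && ((i2 \notin B) && (j2 \notin B)))
       swap_match i1 i2 j1 j2 A B)%:R.
Proof.
rewrite /Delta big_ffun_ord2; congr (_ * _).
rewrite natr_sum -(big_inA_set _ (fun A => (i1 \notin A) && (j1 \notin A))).
under [RHS]eq_bigr do rewrite natr_sum -(big_inA_set _ (fun B => (i2 \notin B) && (j2 \notin B))).
rewrite pair_big /=.
apply: eq_big => [[a b]|[a b] /forallP avoid].
  rewrite !inE; apply/forallP/andP => [avoid|[avoid_a avoid_b] s].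
    by split; [move: (avoid ord0)|move: (avoid ord_max)]; rewrite ffunE.
  by rewrite ffunE; case: s => -[|[|//]] s_lt2.
have := avoid ord0; have := avoid ord_max; rewrite !ffunE /=.
move=> /and3P [inc_b i2b j2b] /and3P [inc_a i1a j1a].
have tperm_ord0 : tperm (0 : 'I_2) 1 ord0 = lift ord0 ord0 by rewrite tpermL; apply: val_inj.
have tperm_ord1 : tperm (0 : 'I_2) 1 (lift ord0 ord0) = ord0.
  by rewrite (_ : lift _ _ = 1) ?tpermR //; apply: val_inj.
rewrite !big_ord_recl !big_ord0 !mulr1 !ffunE tperm_ord0 tperm_ord1 /=.
exact: sgn_sr_swap_match.
Qed.

Lemma pair_delta_cases (R : pzSemiRingType) (T : eqType) (x1 x2 y1 y2 : T) (a b : R) :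
  ((x1 == y1) && (x2 == y2) : nat)%:R * a + ((x1 == y2) && (x2 == y1) : nat)%:R * b =
  if [&& x1 == x2, x2 == y1 & y1 == y2] then a + b
  else if [&& x1 == y2, x2 == y1 & x1 != x2] then b
  else if [&& x1 == y1, x2 == y2 & x1 != x2] then a else 0.
Proof.
by repeat (case: eqP => ? //=; subst); rewrite ?mul1r ?mul0r ?addr0 ?add0r.
Qed.

Theorem lemma3p5 (R : numFieldType) (n k : nat) (hk1 : (1 < k)%N)
    (hkn : (k < n - 1)%N) (i1 i2 j1 j2 : 'I_n) :
  let D := @Delta R n k 2 (tperm (0 : 'I_2) 1) [tuple i1; i2] [tuple j1; j2] in
  let c := ((k%:R ^+ 2)^-1 : R) in
  D = ((i1 == j1) && (i2 == j2) : nat)%:R * c * ('C(n - 2, k - 2))%:R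
      + ((i1 == j2) && (i2 == j1) : nat)%:R * c * ('C(n - 2, k - 1))%:R
  /\
  D = (if [&& i1 == i2, i2 == j1 & j1 == j2] then c * ('C(n - 1, k - 1))%:R
       else if [&& i1 == j2, i2 == j1 & i1 != i2] then c * ('C(n - 2, k - 1))%:R
       else if [&& i1 == j1, i2 == j2 & i1 != i2] then c * ('C(n - 2, k - 2))%:R
       else 0).
Proof.
move=> D c; set cases := (X in _ /\ _ = X).
have D_cases : D = cases.
  rewrite /D /cases Delta_tperm01 sum_swap_match ?card_ord -/c; last by lia.
  by rewrite !subn1 !subn2; repeat case: ifP => _; rewrite ?mulr0.
have pascal : 'C(n - 1, k - 1) = ('C(n - 2, k - 2) + 'C(n - 2, k - 1))%N.
  have -> : (n - 1 = (n - 2).+1)%N by lia.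
  have -> : (k - 1 = (k - 2).+1)%N by lia.
  by rewrite binS addnC.
split; last exact: D_cases.
by rewrite -!mulrA pair_delta_cases D_cases /cases pascal natrD mulrDr.
Qed.
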